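(* With the setting in the context, the set of vectors $\{\mathcal A_0|f\rangle : f\in\ker(\delta^0)\}$ is a basis of the ground state subspace $\mathcal H_0$. Moreover, for $f,g\in\ker(\delta^0)$ one has $\mathcal A_0|f\rangle=\mathcal A_0|g\rangle$ if and only if $f-g\in\mathrm{im}(\delta^{-1})$, so that $[f]\mapsto\mathcal A_0|f\rangle$ is a well-defined bijection from $H^0(C,G)=\ker\delta^0/\mathrm{im}\,\delta^{-1}$ onto this basis.
   Context: $(C_\bullet,\partial^C_\bullet)$ is a chain complex with each $C_n$ free abelian on a finite set $K_n$, $K_n\ne\emptyset$ for finitely many $n$; $(G_\bullet,\partial^G_\bullet)$ is a chain complex of finite abelian groups. $\mathrm{hom}(C,G)^p=\prod_n\mathrm{Hom}(C_n,G_{n-p})$ with $(\delta^pf)_n=f_{n-1}\partial^C_n-(-1)^p\partial^G_{n-p}f_n$. $\mathrm{hom}(C,G)_p=\mathrm{Hom}(\mathrm{hom}(C,G)^p,U(1))$ (written additively), $\chi_m(f)=m(f)$, $\delta_{p+1}m=m\circ\delta^p$. $\mathcal H=\bigotimes_n\bigotimes_{x\in K_n}\mathbb C[G_n]$ with orthonormal basis $|f\rangle$, $f\in\mathrm{hom}(C,G)^0$. $P_t|f\rangle=|f+t\rangle$, $Q_m|f\rangle=\chi_m(f)|f\rangle$; $A_t=P_{\delta^{-1}t}$ ($t\in\mathrm{hom}(C,G)^{-1}$), $B_m=Q_{\delta_1m}$ ($m\in\mathrm{hom}(C,G)_1$). $\mathcal A_0=\frac1{|\mathrm{hom}(C,G)^{-1}|}\sum_{t}A_t$.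 Local elements: for $x\in K_n$, $g\in G_{n-p}$, $gx^*\in\mathrm{hom}(C,G)^p$ has $n$-th component sending $x\mapsto g$ and other basis elements to $0$, other components $0$; for $r\in\mathrm{Hom}(G_{n-p},U(1))$, $rx_*(f)=r(f_n(x))$. $A_x^0=\frac1{|G_{n+1}|}\sum_{h\in G_{n+1}}A_{hx^*}$, $B_x^0=\frac1{|G_{n-1}|}\sum_{r\in\mathrm{Hom}(G_{n-1},U(1))}B_{rx_*}$ for $x\in K_n$; the ground state subspace is $\mathcal H_0=\{\Psi: A_x^0\Psi=B_x^0\Psi=\Psi\ \forall n,\forall x\in K_n\}$. *)

From HB Require Import structures.
From mathcomp Require Import all_boot all_order all_algebra.
From mathcomp Require Import boolp classical_sets fsbigop.
Set Implicit Arguments. Unset Strict Implicit. Unset Printing Implicit Defensive.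
Import Order.TTheory GRing.Theory Num.Theory.
Local Open Scope ring_scope.

Section Model.
Variable C : numClosedFieldType.
(* X = disjoint union of the finite bases K_n, dim x = n iff x \in K_n. *)
Variable X : finType.
Variable dim : X -> int.
Variable G : int -> finZmodType.
Variable dG : forall n : int, {additive G n -> G (n - 1)}.
(* Boundary of C: d^C_n x = \sum_{y} d x y . y  (x in K_n, y in K_{n-1}). *)
Variable d : X -> X -> int.

(* transport along an equality of degrees (0 if the degrees differ) *)
Definition castG (m n : int) (g : G m) : G n :=
  match m =P n with
  | ReflectT e => eq_rect m (fun k => G k : Type) g n e
  | ReflectF _ => 0
  end.
Arguments castG {m} n g.

(* hom(C,G)^p = prod_n Hom(C_n, G_{n-p}); a hom on the free group C_n is
   its values on the basis K_n. *)
Definition cochain (p : int) := {dffun forall x : X, G (dim x - p)}.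

Definition czero p : cochain p := [ffun x => 0].
Definition cadd p (f g : cochain p) : cochain p := [ffun x => f x + g x].
Definition copp p (f : cochain p) : cochain p := [ffun x => - f x].
Definition csub p (f g : cochain p) : cochain p := cadd f (copp g).

(* (delta^p f)_n = f_{n-1} d^C_n - (-1)^p d^G_{n-p} f_n *)
Definition delta p (f : cochain p) : cochain (p + 1) :=
  [ffun x => \sum_(y : X) (castG (dim x - (p + 1)) (f y) *~ d x y)
              - castG (dim x - (p + 1)) (dG _ (f x)) *~ ((-1) ^ p)].

(* Hilbert space with orthonormal basis |f>, f in hom(C,G)^0 *)
Definition state := {ffun cochain 0 -> C^o}.
Definition ket (f : cochain 0) : state := [ffun g => (g == f)%:R].

(* P_t |f> = |f + t> ;  Q_chi |f> = chi(f) |f> *)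
Definition Pop (t : cochain 0) (Psi : state) : state := [ffun g => Psi (csub g t)].
Definition Qop (chi : cochain 0 -> C) (Psi : state) : state :=
  [ffun g => chi g * Psi g].

Definition Aop (t : cochain (-1)) : state -> state := Pop (delta t).
Definition Bop (m : cochain 1 -> C) : state -> state := Qop (fun f => m (delta f)).

Definition A0 (Psi : state) : state :=
  (#|{: cochain (-1)}|%:R)^-1 *: \sum_(t : cochain (-1)) Aop t Psi.

Definition loc p (x : X) (g : G (dim x - p)) : cochain p :=
  [ffun y => if y == x then castG (dim y - p) g else 0].

(* Hom(T, U(1)) as maps T -> C *)
Definition chars (T : finZmodType) : set {ffun T -> C} :=
  [set r | (forall a b, r (a + b) = r a * r b) /\ (forall a, `|r a| = 1)].
Arguments chars T : clear implicits.

Definition Ax0 (x : X) (Psi : state) : state :=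
  (#|{: G (dim x + 1)}|%:R)^-1 *:
    \sum_(h : G (dim x + 1)) Aop (loc (castG (dim x - -1) h)) Psi.

Definition Bx0 (x : X) (Psi : state) : state :=
  (#|{: G (dim x - 1)}|%:R)^-1 *:
    \sum_(r \in chars (G (dim x - 1))) Bop (fun f : cochain 1 => r (f x)) Psi.

Definition ground (Psi : state) : Prop :=
  forall x : X, Ax0 x Psi = Psi /\ Bx0 x Psi = Psi.

Definition groundvecs : seq state :=
  undup [seq A0 (ket f) | f <- enum {: cochain 0} & delta f == czero (0 + 1)].

End Model.

From Pilot Require Import Defs.
From HB Require Import structures.
From mathcomp Require Import all_boot all_order all_algebra.
From mathcomp Require Import boolp classical_sets fsbigop.
From mathcomp Require Import fingroup cyclic zify functions cardinality.
Set Implicit Arguments. Unset Strict Implicit. Unset Printing Implicit Defensive.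
Import Order.TTheory GRing.Theory Num.Theory.
Local Open Scope ring_scope.

(* [A0] averages the translations [|f> |-> |f + delta t>] over all (-1)-cochains [t], so
   [A0 |f>] is the normalised indicator function of the coset [f + im delta^{-1}]; in particular
   [A0 |f> = A0 |g>] iff [f - g] is a coboundary.  Every (-1)-cochain is a sum of local elements
   [h x^*], so the [A_x^0] together fix exactly the states that are constant on these cosets.
   By orthogonality of characters of the finite abelian groups [G_n] (enough characters exist
   because a character of a subgroup extends one cyclic step at a time), [B_x^0] keeps [|f>] if
   [(delta f)_x = 0] and kills it otherwise.  So [H_0] consists of the states supported on
   [ker delta^0] and constant on cosets of [im delta^{-1}]: these are spanned by the coset
   indicators [A0 |f>], [f] in [ker delta^0], which have pairwise disjoint supports. *)

Lemma natr_card_neq0 (R : numDomainType) (T : finType) (x : T) : (#|T|%:R : R) != 0.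
Proof. by rewrite pnatr_eq0 -lt0n; apply/card_gt0P; exists x. Qed.

Lemma mul_fixed_eq0 (R : idomainType) (c x : R) : c != 1 -> c * x = x -> x = 0.
Proof.
move=> c_neq1 /eqP; rewrite -subr_eq0 -{2}[x]mul1r -mulrBl mulf_eq0 subr_eq0.
by rewrite (negbTE c_neq1) => /eqP.
Qed.

Lemma free_ffun_separated (K : fieldType) (D : finType) (s : seq {ffun D -> K^o}) :
  uniq s ->
  (forall v, v \in s -> exists2 p, v p != 0 & forall u, u \in s -> u p != 0 -> u = v) ->
  free s.
Proof.
move=> s_uniq sep; apply/(@freeP _ _ _ (in_tuple s)) => k sum0 i.
have [p vp_neq0 only_v] := sep _ (mem_nth 0 (ltn_ord i)).
have := congr1 (fun w : {ffun D -> K^o} => w p) sum0.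
rewrite sum_ffunE ffunE (bigD1 i) //= big1 ?addr0 => [|j j_neq_i].
  by rewrite ffunE => /eqP; rewrite mulf_eq0 (negbTE vp_neq0) orbF => /eqP.
rewrite ffunE; have [->|ujp] := eqVneq (s`_j p) 0; first exact: mulr0.
have /eqP := only_v _ (mem_nth 0 (ltn_ord j)) ujp.
by rewrite nth_uniq // => /eqP/val_inj ji; rewrite ji eqxx in j_neq_i.
Qed.

(** * Characters of finite abelian groups *)

Section PartialCharacters.
Variables (C : numClosedFieldType) (T : finZmodType).
Implicit Types (H : {set T}) (r : T -> C).

Lemma mulrn_card (a : T) : a *+ #|T| = 0.
Proof. by have := expg_cardG (finset.in_setT a); rewrite finset.cardsT. Qed.

Lemma zmod_closed_mulrn H u k : zmod_closed H -> u \in H -> u *+ k \in H.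
Proof.
move=> /GRing.zmod_closedD[H0 HD] uH; elim: k => [|k IHk]; first by rewrite mulr0n.
by rewrite mulrS HD.
Qed.

Lemma order_modulo H g : zmod_closed H ->
  exists2 m, (0 < m)%N & forall j, (g *+ j \in H) = (m %| j)%N.
Proof.
move=> Hcl; have [H0 HB] := Hcl.
have gkH : exists k, (0 < k)%N && (g *+ k \in H).
  by exists #|T|; rewrite mulrn_card H0 andbT; apply/card_gt0P; exists 0.
have [m /andP[m_gt0 gmH] m_min] := ex_minnP gkH.
exists m => // j; apply/idP/idP => [gjH|/dvdnP[q ->]]; last first.
  by rewrite mulnC mulrnA zmod_closed_mulrn.
have gjmH : g *+ (j %% m)%N \in H.
  have -> : g *+ (j %% m)%N = g *+ j - g *+ (m * (j %/ m))%N.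
    by rewrite {2}(divn_eq j m) mulnC mulrnDr addrAC subrr add0r.
  by rewrite HB // mulrnA zmod_closed_mulrn.
apply: contraT => jm_neq0.
by have := m_min (j %% m)%N; rewrite lt0n jm_neq0 gjmH leqNgt ltn_mod m_gt0 => /(_ isT).
Qed.

Definition partial_char H r :=
  r 0 = 1 /\ {in H &, {morph r : u v / u + v >-> u * v}}.

Lemma partial_char_mulrn H r u k : zmod_closed H -> partial_char H r -> u \in H ->
  r (u *+ k) = r u ^+ k.
Proof.
move=> Hcl [r0 rD] uH; elim: k => [|k IHk]; first by rewrite mulr0n r0.
by rewrite mulrS rD ?zmod_closed_mulrn // IHk exprS.
Qed.

Section ExtensionStep.
Variables (H : {set T}) (r : T -> C) (g : T) (m : nat) (z : C).
Hypotheses (Hcl : zmod_closed H) (rH : partial_char H r).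
Hypothesis gH : forall j, (g *+ j \in H) = (m %| j)%N.
Hypothesis zm : z ^+ m = r (g *+ m).

Lemma partial_char_gmulrn j : (m %| j)%N -> r (g *+ j) = z ^+ j.
Proof.
move=> /dvdnP[q ->]; rewrite mulnC mulrnA (partial_char_mulrn _ Hcl rH) ?gH //.
by rewrite -zm exprM.
Qed.

Lemma partial_char_coset h1 h2 k1 k2 : h1 \in H -> h2 \in H ->
  h1 + g *+ k1 = h2 + g *+ k2 -> r h1 * z ^+ k1 = r h2 * z ^+ k2.
Proof.
wlog le_k21 : h1 h2 k1 k2 / (k2 <= k1)%N.
  move=> W h1H h2H e; case: (leqP k2 k1) => [le|/ltnW le]; first exact: W.
  by apply/esym/W.
move=> h1H h2H e; have [_ HB] := Hcl.
have gk_diff : g *+ (k1 - k2) = h2 - h1.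
  by rewrite mulrnBr //; apply/eqP; rewrite subr_eq addrAC -e [h1 + _]addrC addrK.
have dvd_k : (m %| k1 - k2)%N by rewrite -gH gk_diff HB.
have -> : h2 = h1 + g *+ (k1 - k2) by rewrite gk_diff addrC subrK.
by rewrite (proj2 rH) ?gH // partial_char_gmulrn // -mulrA -exprD subnK.
Qed.

Hypothesis m_gt0 : (0 < m)%N.

(* The extension to [H + <g>] sending [h + g *+ k] to [r h * z ^+ k]. *)
Lemma partial_char_extend_step :
  exists H' r', [/\ zmod_closed H', partial_char H' r', H \subset H', g \in H'
                  & {in H, r' =1 r}] /\ r' g = z.
Proof.
have [H0 HB] := Hcl; have [_ HD] := GRing.zmod_closedD Hcl; have [r0 rD] := rH.
pose H' := [set u | [exists k : 'I_m, u - g *+ k \in H]].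
pose r' u := if [pick k : 'I_m | u - g *+ k \in H] is Some k
             then r (u - g *+ k) * z ^+ k else 0.
have H'E h k : h \in H -> h + g *+ k \in H'.
  move=> hH; rewrite inE; apply/existsP; exists (Ordinal (ltn_pmod k m_gt0)) => /=.
  by rewrite {1}(divn_eq k m) mulrnDr addrA addrK HD // gH dvdn_mull.
have r'E h k : h \in H -> r' (h + g *+ k) = r h * z ^+ k.
  move=> hH; rewrite /r'; case: pickP => [k' hk'|none].
    by apply: partial_char_coset hk' hH _; rewrite subrK.
  by have := H'E h k hH; rewrite inE => /existsP[k']; rewrite none.
have H'P u : u \in H' -> exists h k, h \in H /\ u = h + g *+ k.
  by rewrite inE => /existsP[k hk]; exists (u - g *+ k), (val k); rewrite subrK.
exists H', r'; split; first split.
- split; first by have := H'E 0 0%N H0; rewrite mulr0n addr0.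
  move=> _ _ /H'P[h1 [k1 [h1H ->]]] /H'P[h2 [k2 [h2H ->]]].
  have -> : h1 + g *+ k1 - (h2 + g *+ k2) =
            (h1 - h2 - g *+ (m * k2)) + g *+ (k1 + (m * k2 - k2)).
    by rewrite mulrnDr mulrnBr ?leq_pmull // [g *+ k1 + _]addrCA subrKA opprD addrACA.
  by rewrite H'E // HB ?HB // gH dvdn_mulr.
- split; first by have := r'E 0 0%N H0; rewrite mulr0n addr0 r0 mulr1.
  move=> _ _ /H'P[h1 [k1 [h1H ->]]] /H'P[h2 [k2 [h2H ->]]].
  by rewrite addrACA -mulrnDr !r'E ?HD // rD // exprD mulrACA.
- by apply/fintype.subsetP => h hH; have := H'E h 0%N hH; rewrite mulr0n addr0.
- by have := H'E 0 1%N H0; rewrite add0r.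
- by move=> h hH; have := r'E h 0%N hH; rewrite mulr0n addr0 mulr1.
- by have := r'E 0 1%N H0; rewrite add0r r0 mul1r.
Qed.

End ExtensionStep.

Lemma partial_char_extend H r : zmod_closed H -> partial_char H r ->
  exists2 r', partial_char [set: T]%G r' & {in H, r' =1 r}.
Proof.
have [n] := ubnP #|~: H|; elim: n => // n IHn in H r * => ltHn Hcl rH.
have [HC0 | [g gHC]] := set_0Vmem (~: H).
  by exists r => //; move: rH; rewrite -[H]finset.setCK HC0 finset.setC0.
have [m m_gt0 gH] := order_modulo g Hcl.
have [H' [r' [[H'cl r'H' sHH' gH' r'r] _]]] :=
  partial_char_extend_step Hcl rH gH (rootCK m_gt0 (r (g *+ m))) m_gt0.
have [|r'' r''H agree] := IHn H' r' _ H'cl r'H'.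
  apply: leq_trans (ltnSE ltHn); apply: proper_card; apply/properP.
  split; first by rewrite finset.setCS.
  by exists g; rewrite // inE gH'.
by exists r'' => // h hH; rewrite agree ?r'r // (fintype.subsetP sHH').
Qed.

Lemma partial_char_setT_chars r : partial_char [set: T]%G r -> @chars C T [ffun u => r u].
Proof.
move=> rT; have [_ rD] := rT; split=> [a b|a]; rewrite !ffunE ?rD ?finset.in_setT //.
have setT_cl : zmod_closed [set: T]%G by split=> [|u v _ _]; apply: finset.in_setT.
have : r a ^+ #|T| = 1.
  by rewrite -(partial_char_mulrn #|T| setT_cl rT (finset.in_setT a)) mulrn_card; case: rT.
move/(congr1 Num.norm); rewrite normrX normr1 => /eqP.
by rewrite pexpr_eq1 ?normr_ge0 // => [/eqP|]; last by apply/card_gt0P; exists 0.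
Qed.

Lemma nontrivial_root_of_unity m : (1 < m)%N -> exists2 z : C, z ^+ m = 1 & z != 1.
Proof.
move=> m_gt1; pose p : {poly C} := \poly_(i < m) 1.
have size_p : size p = m by rewrite size_poly_eq // oner_neq0.
have [z /rootP pz0] : exists z, root p z by apply/closed_rootP; rewrite size_p gtn_eqF.
have sum_z : \sum_(i < m) z ^+ i = 0.
  by rewrite -[RHS]pz0 horner_poly; apply: eq_bigr => i _; rewrite mul1r.
exists z; first by apply/eqP; rewrite -subr_eq0 subrX1 sum_z mulr0.
apply: contra_eq_neq sum_z => ->; under eq_bigr do rewrite expr1n.
by rewrite sumr_const card_ord pnatr_eq0 -lt0n ltnW.
Qed.

Lemma chars_separate (a : T) : a != 0 -> exists2 r, @chars C T r & r a != 1.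
Proof.
move=> a_neq0; pose H0 := [set 0 : T]%G.
have H0cl : zmod_closed H0.
  by split=> [|u v]; rewrite ?inE // => /eqP-> /eqP->; rewrite subr0.
have r0H0 : partial_char H0 (fun=> 1) by split=> // u v _ _; rewrite mulr1.
have [m m_gt0 aH0] := order_modulo a H0cl.
have m_gt1 : (1 < m)%N.
  rewrite ltn_neqAle m_gt0 andbT; apply: contra_neq a_neq0 => m1.
  by move: (aH0 1%N); rewrite -m1 dvdnn inE => /eqP.
have [z zm z_neq1] := nontrivial_root_of_unity m_gt1.
have [H1 [r1 [[H1cl r1H1 _ aH1 _] r1a]]] :=
  partial_char_extend_step H0cl r0H0 aH0 zm m_gt0.
have [r r_char agree] := partial_char_extend H1cl r1H1.
by exists [ffun u => r u]; [exact: partial_char_setT_chars | rewrite ffunE agree ?r1a].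
Qed.

End PartialCharacters.

Section CharacterOrthogonality.
Variables (C : numClosedFieldType) (T : finZmodType).
Implicit Types (r s : {ffun T -> C}) (a b : T).
Local Notation chars := (@chars C T).

Lemma char_neq0 r a : chars r -> r a != 0.
Proof. by case=> _ /(_ a) r1; apply: contra_eq_neq r1 => ->; rewrite normr0 eq_sym oner_neq0. Qed.

Lemma char0 r : chars r -> r 0 = 1.
Proof.
move=> rc; apply: (mulfI (char_neq0 0 rc)).
by rewrite mulr1 -(proj1 rc) addr0.
Qed.

Lemma charN r a : chars r -> r (- a) * r a = 1.
Proof. by move=> rc; rewrite -(proj1 rc) addNr char0. Qed.

Lemma char1 : chars [ffun=> 1].
Proof. by split=> [a b|a]; rewrite !ffunE ?mulr1 ?normr1. Qed.

Lemma charM r s : chars r -> chars s -> chars [ffun a => r a * s a].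
Proof.
move=> [rD r1] [sD s1]; split=> [a b|a]; rewrite !ffunE; first by rewrite rD sD mulrACA.
by rewrite normrM r1 s1 mulr1.
Qed.

Lemma charV r : chars r -> chars [ffun a => r (- a)].
Proof. by move=> [rD r1]; split=> [a b|a]; rewrite !ffunE ?opprD ?rD. Qed.

Lemma char_exp_card r a : chars r -> r a ^+ #|T| = 1.
Proof.
move=> rc; rewrite -(char0 rc) -(mulrn_card a).
elim: #|T| => [|k IHk]; first by rewrite mulr0n expr0 char0.
by rewrite mulrS (proj1 rc) -IHk exprS.
Qed.

(* Character values are roots of ['X^#|T| - 1], which has finitely many roots. *)
Lemma chars_finite : finite_set chars.
Proof.
have T_gt0 : (0 < #|T|)%N by apply/card_gt0P; exists 0.
have [rs def_p] := closed_field_poly_normal ('X^#|T| - 1 : {poly C}).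
have root_rs z : z ^+ #|T| = 1 -> z \in rs.
  move=> zT; rewrite -root_prod_XsubC -[\prod_(_ <- _) _]scale1r.
  rewrite -(monicP (monicXnsubC 1 T_gt0)) -def_p.
  by rewrite rootE !hornerE zT subrr.
pose of_index (f : {ffun T -> 'I_(size rs)}) := [ffun a => rs`_(f a)].
apply: (sub_finite_set _ (finite_image of_index (finite_finset (X := setT)))) => r rc.
have idx_lt a : (index (r a) rs < size rs)%N by rewrite index_mem root_rs ?char_exp_card.
exists [ffun a => Ordinal (idx_lt a)]; first by [].
by apply/ffunP => a; rewrite !ffunE /= nth_index ?root_rs ?char_exp_card.
Qed.

Lemma sum_chars_neq0 a : a != 0 -> \sum_(r \in chars) r a = 0.
Proof.
move=> a_neq0; have [r0 r0c r0a] := chars_separate C a_neq0.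
pose mu r := [ffun b => r0 b * r b].
have mu_bij : set_bij chars chars mu.
  split=> [r /(charM r0c) //|r s _ _ /ffunP eq_mu|r rc].
    by apply/ffunP => b; apply: (mulfI (char_neq0 b r0c)); have := eq_mu b; rewrite !ffunE.
  exists [ffun b => [ffun c => r0 (- c)] b * r b]; first exact: charM (charV r0c) rc.
  by apply/ffunP => b; rewrite !ffunE mulrA (mulrC (r0 b)) charN ?mul1r.
apply: (mul_fixed_eq0 r0a); rewrite [RHS](reindex_fsbig _ _ _ _ mu_bij) mulr_fsumr.
by apply: eq_fsbigr => r _; rewrite ffunE.
Qed.

Lemma sum_char r : chars r -> \sum_a r a = (#|T| * (r == [ffun=> 1]))%:R.
Proof.
move=> rc; case: eqP => [->|/eqP r_neq1].
  by under eq_bigr do rewrite ffunE; rewrite sumr_const muln1.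
have [b rb] : exists b, r b != 1.
  apply/existsP; apply: contra_neqT r_neq1 => /existsPn r1.
  by apply/ffunP => b; rewrite ffunE; apply/eqP/negPn.
rewrite muln0; apply: (mul_fixed_eq0 rb); rewrite mulr_sumr [RHS](reindex_inj (addIr b)).
by apply: eq_bigr => a _; rewrite (proj1 rc) mulrC.
Qed.

Lemma sum_chars a : \sum_(r \in chars) r a = (#|T| * (a == 0))%:R.
Proof.
have [->|] := eqVneq a 0; last by move/sum_chars_neq0->; rewrite muln0.
transitivity (\sum_(b : T) \sum_(r \in chars) r b).
  by rewrite [RHS](bigD1 0) //= [X in _ + X]big1 ?addr0 // => b /sum_chars_neq0.
under eq_bigr do rewrite (fsbig_finite _ _ chars_finite).
rewrite exchange_big -(fsbig_finite _ _ chars_finite) /=.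
rewrite (eq_fsbigr (fun r => (#|T| * (r == [ffun=> 1]))%:R)); last by move=> r /set_mem/sum_char.
rewrite (fsbigD1 [ffun=> 1] _ _ chars_finite char1) /= eqxx fsbig1 ?addr0 ?muln1 // => r [_].
by move=> /eqP/negbTE->; rewrite muln0.
Qed.
End CharacterOrthogonality.

(** * Cochains *)

Section Transport.
Variable G : int -> finZmodType.
Variable dG : forall n : int, {additive G n -> G (n - 1)}.

Lemma castG_id n (g : G n) : castG n g = g.
Proof. by rewrite /castG; case: (n =P n) => // e; rewrite eq_axiomK. Qed.

Lemma castG_castG k m n (g : G k) : m = n -> castG n (castG m g) = castG n g.
Proof. by move=> e; case: n / e; rewrite castG_id. Qed.

Lemma dG_castG m n (g : G m) : m = n -> dG n (castG n g) = castG (n - 1) (dG m g).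
Proof. by move=> e; case: n / e; rewrite !castG_id. Qed.

Section CastAdditive.
Variables m n : int.

Fact castG_is_zmod_morphism : zmod_morphism (@castG G m n).
Proof.
move=> a b; rewrite /castG; case: (m =P n) => [e|_]; last by rewrite subr0.
by case: n / e.
Qed.

Definition castG_additive : {additive G m -> G n} :=
  HB.pack (@castG G m n)
    (GRing.isZmodMorphism.Build (G m) (G n) (@castG G m n) castG_is_zmod_morphism).
Canonical castG_additive.

End CastAdditive.

End Transport.

Section Cochains.
Variables (X : finType) (dim : X -> int) (G : int -> finZmodType).
Variable dG : forall n : int, {additive G n -> G (n - 1)}.
Variable d : X -> X -> int.
Local Notation cochain := (cochain dim G).
Local Notation delta := (delta dG d).

Section CochainZmod.
Variable p : int.

Fact cochain_addA : associative (@cadd _ dim G p).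
Proof. by move=> f g h; apply/ffunP => x; rewrite !ffunE addrA. Qed.

Fact cochain_addC : commutative (@cadd _ dim G p).
Proof. by move=> f g; apply/ffunP => x; rewrite !ffunE; apply: addrC. Qed.

Fact cochain_add0 : left_id (czero dim G p) (@cadd _ dim G p).
Proof. by move=> f; apply/ffunP => x; rewrite !ffunE add0r. Qed.

Fact cochain_addN : left_inverse (czero dim G p) (@copp _ dim G p) (@cadd _ dim G p).
Proof. by move=> f; apply/ffunP => x; rewrite !ffunE addNr. Qed.

HB.instance Definition _ := Finite.on (cochain p).
HB.instance Definition _ :=
  GRing.isZmodule.Build (cochain p) cochain_addA cochain_addC cochain_add0 cochain_addN.

End CochainZmod.

Section DeltaAdditive.
Variable p : int.

Fact delta_is_zmod_morphism : zmod_morphism (@Defs.delta _ _ _ dG d p).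
Proof.
move=> f g; apply/ffunP => x; rewrite !ffunE (raddfB (dG _)) raddfB /= mulrzBl.
under eq_bigr do rewrite !ffunE raddfB /= mulrzBl.
by rewrite sumrB !opprD addrACA.
Qed.

HB.instance Definition _ :=
  GRing.isZmodMorphism.Build (cochain p) (cochain (p + 1)) (@Defs.delta _ _ _ dG d p)
    delta_is_zmod_morphism.

End DeltaAdditive.

Lemma locD p x (a b : G (dim x - p)) : loc (a + b) = loc a + loc b :> cochain p.
Proof. by apply/ffunP => y; rewrite !ffunE; case: eqP => _; rewrite ?raddfD ?addr0. Qed.

Lemma cochain_sumE p (I : Type) (r : seq I) (P : pred I) (F : I -> cochain p) y :
  (\sum_(i <- r | P i) F i) y = \sum_(i <- r | P i) F i y.
Proof. by apply: (big_morph (fun f : cochain p => f y)) => [f g|]; rewrite ffunE. Qed.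

Lemma cochain_sum_loc p (t : cochain p) : t = \sum_x loc (t x).
Proof.
apply/ffunP => y; rewrite cochain_sumE (bigD1 y) //= ffunE eqxx castG_id big1 ?addr0 //.
by move=> x /negbTE x_neq_y; rewrite ffunE eq_sym x_neq_y.
Qed.

Section DeltaDelta.
Hypothesis d_supp : forall x y : X, d x y != 0 -> dim y = dim x - 1.
Hypothesis dd : forall x z : X, \sum_(y : X) d x y * d y z = 0.
Hypothesis dGdG : forall (n : int) (g : G n), dG (n - 1) (dG n g) = 0.

Lemma delta_delta p (f : cochain p) : delta (delta f) = 0.
Proof.
(* The [d * d] terms vanish by [dd]; the two [dG] terms cancel as the sign flips with [p]. *)
apply/ffunP => x; rewrite [RHS]ffunE ffunE.
have sign : (-1) ^ (p + 1) = - (-1) ^ p :> int.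
  by rewrite exprzDr ?unitrN1 // expr1z mulrN1.
have boundary_y y : castG (dim x - (p + 1 + 1)) ((delta f) y) *~ d x y =
    \sum_z castG (dim x - (p + 1 + 1)) (f z) *~ (d x y * d y z)
    - castG (dim x - (p + 1 + 1)) (dG _ (f y)) *~ (d x y * (-1) ^ p).
  have [->|/d_supp dim_y] := eqVneq (d x y) 0.
    by rewrite mulr0z mul0r mulr0z subr0 big1 // => z _; rewrite mul0r mulr0z.
  rewrite ffunE raddfB raddf_sum /= mulrzBl mulrz_suml.
  have dim_xy : dim y - (p + 1) = dim x - (p + 1 + 1) by rewrite dim_y; lia.
  congr (_ - _); first apply: eq_bigr => z _.
    by rewrite raddfMz /= castG_castG // [d x y * _]mulrC mulrzA.
  by rewrite raddfMz /= castG_castG // [d x y * _]mulrC mulrzA.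
have boundary_x : castG (dim x - (p + 1 + 1)) (dG _ ((delta f) x)) =
    \sum_y castG (dim x - (p + 1 + 1)) (dG _ (f y)) *~ d x y.
  rewrite ffunE !raddfB !raddf_sum /= (raddfMz (dG _)) /=.
  rewrite dG_castG ?dGdG; last by lia.
  rewrite !raddf0 mul0rz (raddf0 (castG_additive _ _ _)) subr0.
  apply: eq_bigr => y _; rewrite !raddfMz /=.
  have [->|/d_supp dim_y] := eqVneq (d x y) 0; first by rewrite !mulr0z.
  by rewrite dG_castG ?castG_castG //; lia.
rewrite (eq_bigr _ (fun y _ => boundary_y y)) boundary_x sumrB exchange_big /=.
rewrite big1 => [|z _]; last by rewrite -mulrz_sumr dd mulr0z.
under eq_bigr do rewrite mulrzA.
by rewrite sign mulrNz opprK -mulrz_suml sub0r addNr.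
Qed.

End DeltaDelta.
End Cochains.

(** * The ground state space *)

Section Operators.
Variables (C : numClosedFieldType) (X : finType) (dim : X -> int) (G : int -> finZmodType).
Variable dG : forall n : int, {additive G n -> G (n - 1)}.
Variable d : X -> X -> int.
Local Notation cochain := (cochain dim G).
Local Notation state := (state C dim G).
Local Notation delta := (delta dG d).
Hypothesis d_supp : forall x y : X, d x y != 0 -> dim y = dim x - 1.
Hypothesis dd : forall x z : X, \sum_(y : X) d x y * d y z = 0.
Hypothesis dGdG : forall (n : int) (g : G n), dG (n - 1) (dG n g) = 0.
Implicit Types (Psi : state) (f g : cochain 0).

Section TranslationAverage.
Variables (A : finZmodType) (phi : A -> cochain 0).
Hypothesis phiD : {morph phi : a b / a + b}.

Definition translation_average Psi : state :=
  (#|A|%:R)^-1 *: \sum_(a : A) Pop (phi a) Psi.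

Lemma translation_averageE Psi g :
  translation_average Psi g = (#|A|%:R)^-1 * \sum_a Psi (g - phi a).
Proof. by rewrite ffunE sum_ffunE; congr (_ * _); apply: eq_bigr => a _; rewrite ffunE. Qed.

Lemma translation_average_invariant Psi a g :
  translation_average Psi (g - phi a) = translation_average Psi g.
Proof.
rewrite !translation_averageE [in RHS](reindex_inj (addrI a)); congr (_ * _).
by apply: eq_bigr => b _; rewrite phiD opprD addrA.
Qed.

Lemma translation_average_fixed Psi :
  translation_average Psi = Psi <-> forall a g, Psi (g - phi a) = Psi g.
Proof.
split=> [<- a g|Psi_inv]; first exact: translation_average_invariant.
apply/ffunP => g; rewrite translation_averageE.
under eq_bigr do rewrite Psi_inv.
by rewrite sumr_const -[Psi g *+ _]mulr_natr mulrCA mulVf ?mulr1 // (natr_card_neq0 _ (0 : A)).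
Qed.

End TranslationAverage.

Definition supported_on_cocycles Psi := forall g, delta g != 0 -> Psi g = 0.
Definition coboundary_invariant Psi := forall (t : cochain (-1)) g, Psi (g - delta t) = Psi g.

Lemma A0E Psi : A0 dG d Psi = translation_average (delta (p := -1)) Psi.
Proof. by []. Qed.

Lemma Ax0E x Psi :
  Ax0 dG d x Psi = translation_average
    (fun h : G (dim x + 1) => delta (loc (castG (dim x - -1) h) : cochain (-1))) Psi.
Proof. by []. Qed.

Lemma Bx0E x Psi g : Bx0 dG d x Psi g = (((delta g) x == 0)%:R : C) * Psi g.
Proof.
rewrite ffunE (fsbig_finite _ _ (chars_finite _ _)) /= sum_ffunE.
under eq_bigr do rewrite ffunE.
rewrite -mulr_suml -(fsbig_finite _ _ (chars_finite _ _)) sum_chars.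
by rewrite -[_ *: _]/(_ * _) natrM !mulrA mulVf ?mul1r // (natr_card_neq0 _ (0 : G (dim x - 1))).
Qed.

Lemma Bx0_fixed x Psi : Bx0 dG d x Psi = Psi <-> forall g, (delta g) x != 0 -> Psi g = 0.
Proof.
split=> [<- g /negbTE dgx|Psi0]; first by rewrite Bx0E dgx mul0r.
apply/ffunP => g; rewrite Bx0E.
by case: eqP => [_|/eqP/Psi0->]; rewrite ?mul1r ?mulr0.
Qed.

Lemma coboundary_invariant_local Psi :
  (forall x (h : G (dim x + 1)) g,
     Psi (g - delta (loc (castG (dim x - -1) h) : cochain (-1))) = Psi g) ->
  coboundary_invariant Psi.
Proof.
move=> Psi_inv t; rewrite [t]cochain_sum_loc.
apply: (big_ind (fun s : cochain (-1) => forall g, Psi (g - delta s) = Psi g)).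
- by move=> g; rewrite (raddf0 (delta (p := -1))) subr0.
- by move=> s u IHs IHu g; rewrite raddfD opprD addrA IHu IHs.
move=> x _ g; have := Psi_inv x (castG (dim x + 1) (t x)) g.
by rewrite castG_castG ?castG_id //; lia.
Qed.

Lemma ground_iff Psi :
  ground dG d Psi <-> supported_on_cocycles Psi /\ coboundary_invariant Psi.
Proof.
have phiD x : {morph (fun h : G (dim x + 1) =>
                        delta (loc (castG (dim x - -1) h) : cochain (-1))) : a b / a + b}.
  by move=> a b /=; rewrite raddfD locD raddfD.
split=> [ground_Psi|[Psi_supp Psi_inv] x]; last split.
- split=> [g dg_neq0|].
    have [x dgx] : exists x, (delta g) x != 0.
      apply/existsP; apply: contraR dg_neq0 => /existsPn dg0.
      by apply/eqP/ffunP => x; rewrite [RHS]ffunE; apply/eqP; move: (dg0 x); rewrite negbK.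
    by have [_ /Bx0_fixed] := ground_Psi x; apply.
  apply: coboundary_invariant_local => x.
  by have [] := ground_Psi x; rewrite Ax0E => /(translation_average_fixed (phiD x)).
- by rewrite Ax0E; apply/(translation_average_fixed (phiD x)) => h g; apply: Psi_inv.
by apply/Bx0_fixed => g dgx; apply: Psi_supp; apply: contra_neq dgx => ->; rewrite ffunE.
Qed.

Lemma A0_ket_neq0 f g :
  A0 dG d (ket C f) g != 0 <-> exists t : cochain (-1), g - delta t = f.
Proof.
rewrite A0E translation_averageE mulf_eq0 invr_eq0 negb_or.
rewrite (natr_card_neq0 _ (0 : cochain (-1))) /=.
under eq_bigr do rewrite ffunE.
rewrite -natr_sum pnatr_eq0 sum_nat_eq0 negb_forall.
split=> [/existsP[t]|[t gtf]]; first by rewrite eqb0 negbK => /eqP; exists t.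
by apply/existsP; exists t; rewrite gtf eqxx.
Qed.

Lemma A0_ket_self f : A0 dG d (ket C f) f != 0.
Proof. by apply/A0_ket_neq0; exists 0; rewrite raddf0 subr0. Qed.

Lemma A0_ket_eq f f' (t : cochain (-1)) :
  f - f' = delta t -> A0 dG d (ket C f) = A0 dG d (ket C f').
Proof.
move=> ff't; apply/ffunP => g; rewrite !A0E !translation_averageE.
rewrite [in RHS](reindex_inj (addIr t)); congr (_ * _); apply: eq_bigr => s _.
rewrite !ffunE raddfD /= opprD addrA -ff't; congr (_ : bool)%:R.
apply/eqP/eqP => [<-|e]; first by rewrite opprB addrC subrK.
by rewrite -[LHS](subrK (f - f')) e addrC subrK.
Qed.

Lemma A0_coboundary_invariant Psi : coboundary_invariant (A0 dG d Psi).
Proof. by move=> t g; rewrite A0E (translation_average_invariant (raddfD _)). Qed.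

Lemma A0_ket_supported f : delta f = 0 -> supported_on_cocycles (A0 dG d (ket C f)).
Proof.
move=> df0 g; have [//|/A0_ket_neq0[t gtf]] := eqVneq (A0 dG d (ket C f) g) 0.
have -> : g = f + delta t by rewrite -gtf subrK.
have ddt : delta (delta t : cochain 0) = 0 := delta_delta d_supp dd dGdG t.
by rewrite raddfD /= df0 ddt addr0 eqxx.
Qed.

Lemma A0_ket_expansion Psi : A0 dG d Psi = \sum_f Psi f *: A0 dG d (ket C f).
Proof.
apply/ffunP => g; rewrite sum_ffunE A0E translation_averageE.
transitivity ((#|{: cochain (-1)}|%:R)^-1 *
              \sum_(t : cochain (-1)) \sum_f Psi f * ket C f ((g : cochain 0) - delta t)).
  congr (_ * _); apply: eq_bigr => t _.
  rewrite (bigD1 ((g : cochain 0) - delta t)) //= ffunE eqxx mulr1 big1 ?addr0 //.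
  move=> f /negbTE f_neq.
  by rewrite ffunE eq_sym f_neq mulr0.
rewrite exchange_big mulr_sumr; apply: eq_bigr => f _.
rewrite [in RHS]ffunE A0E translation_averageE -[_ *: _]/(_ * _) mulrCA.
by congr (_ * _); rewrite mulr_sumr.
Qed.

Lemma mem_groundvecs v :
  v \in groundvecs C dim dG d <-> exists2 f, delta f = 0 & v = A0 dG d (ket C f).
Proof.
rewrite mem_undup; split=> [/mapP[f]|[f df0 ->]].
  by rewrite mem_filter => /andP[/eqP df0 _] ->; exists f.
by apply/mapP; exists f; rewrite // mem_filter df0 eqxx mem_enum.
Qed.

Lemma free_groundvecs : free (groundvecs C dim dG d).
Proof.
apply: free_ffun_separated; first exact: undup_uniq.
move=> _ /mem_groundvecs[f _ ->]; exists f; first exact: A0_ket_self.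
move=> _ /mem_groundvecs[f' _ ->] /A0_ket_neq0[t ftf'].
have f'ft : f' - f = delta (- t) by rewrite -ftf' raddfN addrAC subrr add0r.
exact: A0_ket_eq f'ft.
Qed.

Lemma ground_span Psi : ground dG d Psi <-> Psi \in <<groundvecs C dim dG d>>%VS.
Proof.
rewrite ground_iff; split=> [[Psi_supp Psi_inv]|].
  have -> : Psi = A0 dG d Psi.
    by rewrite A0E; apply/esym/(translation_average_fixed (raddfD _)).
  rewrite A0_ket_expansion; apply: memv_suml => f _.
  have [df0|/Psi_supp->] := eqVneq (delta f) 0; last by rewrite scale0r mem0v.
  by apply/memvZ/memv_span/mem_groundvecs; exists f.
move=> /(@coord_span _ _ _ (in_tuple _))->; split=> [g dg|t g]; rewrite !sum_ffunE.
  apply: big1 => i _; rewrite ffunE.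
  have /mem_groundvecs[f df0 ->] := mem_nth 0 (ltn_ord i).
  by rewrite (A0_ket_supported df0 dg) scaler0.
apply: eq_bigr => i _; rewrite !ffunE.
have /mem_groundvecs[f _ ->] := mem_nth 0 (ltn_ord i).
by rewrite A0_coboundary_invariant.
Qed.

Lemma A0_ket_eqP f g :
  A0 dG d (ket C f) = A0 dG d (ket C g) <-> exists t : cochain (-1), f - g = delta t.
Proof.
split=> [eq_A0|[t fgt]]; last exact: A0_ket_eq fgt.
have := A0_ket_self f; rewrite eq_A0 => /A0_ket_neq0[t ftg].
by exists t; rewrite -ftg opprB addrC subrK.
Qed.

End Operators.

Theorem proposition5 (C : numClosedFieldType) (X : finType) (dim : X -> int)
  (G : int -> finZmodType) (dG : forall n : int, {additive G n -> G (n - 1)})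
  (d : X -> X -> int)
  (d_supp : forall x y : X, d x y != 0 -> dim y = dim x - 1)
  (dd : forall x z : X, \sum_(y : X) d x y * d y z = 0)
  (dGdG : forall (n : int) (g : G n), dG (n - 1) (dG n g) = 0) :
  let S := groundvecs C dim dG d in
  free S /\
  (forall Psi : state C dim G, ground dG d Psi <-> Psi \in <<S>>%VS) /\
  (forall f g : cochain dim G 0,
      delta dG d f = czero dim G (0 + 1) ->
      delta dG d g = czero dim G (0 + 1) ->
      (A0 dG d (ket C f) = A0 dG d (ket C g) <->
       exists t : cochain dim G (-1), csub f g = delta dG d t)).
Proof.
split; first exact: free_groundvecs.
split; first exact: ground_span d_supp dd dGdG.
by move=> f g _ _; exact: A0_ket_eqP.
Qed.
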